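(* For any group $H$, the set $\mathcal E_H=\{G\in\mathcal G:\ H\text{ is embeddable into }\overline G\}$ is analytic in $\mathcal G$; therefore it is either meager or comeager in $\mathcal G$.
   Context: Let $\mathbb N=\{1,2,3,\dots\}$. Equip $\mathbb N^{\mathbb N\times\mathbb N}$ with the product topology of the discrete topology on $\mathbb N$. Let $\mathcal G$ be the (Polish) subspace consisting of those $A\in\mathbb N^{\mathbb N\times\mathbb N}$ that are the multiplication table of a group on the underlying set $\mathbb N$ whose identity element is $1$. For $G\in\mathcal G$, $\overline G$ denotes the group on $\mathbb N$ with multiplication table $G$. A subset of a Polish space $Y$ is analytic if it is a continuous image of a Borel subset of a Polish space. *)

From HB Require Import structures.
From mathcomp Require Import all_boot all_order all_algebra.
From mathcomp Require Import all_classical reals topology measure Rstruct.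

Set Implicit Arguments.
Unset Strict Implicit.
Unset Printing Implicit Defensive.
Import Order.TTheory GRing.Theory Num.Theory.
Local Open Scope classical_set_scope.
Local Open Scope ring_scope.

Definition complete_compatible_metric (P : topologicalType)
    (d : P -> P -> Rdefinitions.R) : Prop :=
  [/\ (forall x y, 0 <= d x y /\ (d x y = 0 <-> x = y)),
      (forall x y, d x y = d y x),
      (forall x y z, d x z <= d x y + d y z),
      (forall U : set P, open U <->
         (forall x, U x -> exists2 e : Rdefinitions.R, 0 < e &
            forall y, d x y < e -> U y)) &
      (forall u : nat -> P,
         (forall e : Rdefinitions.R, 0 < e ->
            exists N, forall m n, (N <= m)%N -> (N <= n)%N -> d (u m) (u n) < e) ->
         exists x, forall e : Rdefinitions.R, 0 < e ->
            exists N, forall n, (N <= n)%N -> d (u n) x < e)].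

Definition polish (P : topologicalType) : Prop :=
  (exists D : set P, countable D /\ closure D = setT) /\
  (exists d : P -> P -> Rdefinitions.R, complete_compatible_metric d).

Definition borel_set (P : topologicalType) (B : set P) : Prop :=
  <<s [set U : set P | open U] >> B.

Definition analytic (Y : topologicalType) (A : set Y) : Prop :=
  exists (P : topologicalType) (B : set P) (f : P -> Y),
    [/\ polish P, borel_set B, {within B, continuous f} & f @` B = A].

Definition nowhere_dense (T : topologicalType) (A : set T) : Prop :=
  interior (closure A) = set0.

Definition meager (T : topologicalType) (A : set T) : Prop :=
  exists F : nat -> set T, (forall n, nowhere_dense (F n)) /\
    A = \bigcup_n F n.

Definition comeager (T : topologicalType) (A : set T) : Prop :=
  meager (~` A).

(* Convention: the underlying set N = {1,2,3,...} is represented by nat,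
   the natural number k standing for k+1; so the identity element 1 is 0.
   N^(N x N) with the product of discrete topologies: *)
Definition table_space := {ptws (nat * nat) -> nat}.

Definition is_group_table (A : table_space) : Prop :=
  [/\ (forall x y z, A (A (x, y), z) = A (x, A (y, z))),
      (forall x, A (0%N, x) = x /\ A (x, 0%N) = x) &
      (forall x, exists y, A (x, y) = 0%N /\ A (y, x) = 0%N)].

Definition Gspace : topologicalType := set_type is_group_table.

Definition is_group (H : Type) (mul : H -> H -> H) (one : H) (inv : H -> H) :=
  [/\ (forall a b c, mul (mul a b) c = mul a (mul b c)),
      (forall a, mul one a = a /\ mul a one = a) &
      (forall a, mul (inv a) a = one /\ mul a (inv a) = one)].

Definition embeddable (H : Type) (mul : H -> H -> H) (G : Gspace) : Prop :=
  exists phi : H -> nat, injective phi /\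
    forall a b, phi (mul a b) = (set_val G) (phi a, phi b).

Definition E_set (H : Type) (mul : H -> H -> H) : set Gspace :=
  [set G | embeddable mul G].

(* A point of the Baire space N^N can code a group table together
   with the labels of an enumeration e of H; the codes of tables in which these
   labels form an embedding are defined by clopen conditions, hence form a Borel
   set, and decoding is continuous on it, so E_H is analytic.  (If H does not
   embed at all, E_H is empty.)  E_H is also the Souslin operation applied to
   the closed conditions on finite initial segments of such a labelling, so it
   has the Baire property: either it is meager, or it is comeager in some basic
   open set.  E_H is invariant under relabelling the non-identity elements, and
   any two nonempty basic open sets can be made to meet by a relabelling (put
   both groups inside their direct product), so in the second case E_H is
   comeager everywhere. *)

From HB Require Import structures.
From mathcomp Require Import all_boot all_order all_algebra.
From mathcomp Require Import all_classical reals topology measure Rstruct.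
From mathcomp Require Import zify.
From Stdlib Require Cantor PeanoNat.

Set Implicit Arguments.
Unset Strict Implicit.
Unset Printing Implicit Defensive.
Import Order.TTheory GRing.Theory Num.Theory.
Local Open Scope classical_set_scope.

Section PointwiseNat.
Variable U : topologicalType.

Lemma ptws_nbhs_agree (f : {ptws U -> nat}) (V : set {ptws U -> nat}) :
  nbhs f V -> exists lp : seq U, forall g, {in lp, g =1 f} -> V g.
Proof.
pose F := [set S : set {ptws U -> nat} |
  exists lp : seq U, forall g, {in lp, g =1 f} -> S g].
have FF : Filter F.
  constructor.
  - by exists [::].
  - move=> P Q [l1 h1] [l2 h2]; exists (l1 ++ l2) => g hg; split.
      by apply: h1 => p hp; apply: hg; rewrite mem_cat hp.
    by apply: h2 => p hp; apply: hg; rewrite mem_cat hp orbT.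
  - by move=> P Q PQ [l h]; exists l => g /h /PQ.
have Ff : F `=>` nbhs f.
  apply/pointwise_cvgP => t W /=.
  rewrite nbhs_principalE => /principal_filterP Wt.
  by exists [:: t] => g hg; rewrite /= hg ?mem_head.
exact: Ff.
Qed.

Lemma ptws_open_graph (l : seq (U * nat)) :
  open [set g : {ptws U -> nat} | forall q, q \in l -> g q.1 = q.2].
Proof.
elim: l => [|[p v] l IH].
  by rewrite (_ : [set g | _] = setT); [exact: openT | apply/seteqP].
rewrite (_ : [set g | _] = proj p @^-1` [set v] `&`
    [set g : {ptws U -> nat} | forall q, q \in l -> g q.1 = q.2]).
  apply: openI => //; apply: open_comp => [g _|]; last exact: discrete_open.
  exact: proj_continuous.
apply/seteqP; split => g.
  move=> h; split; first by apply: (h (p, v)); rewrite mem_head.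
  by move=> q hq; apply: h; rewrite inE hq orbT.
by move=> [/= h1 h2] q; rewrite inE => /orP[/eqP->|/h2].
Qed.

Lemma ptws_open_agree (lp : seq U) (f : U -> nat) :
  open [set g : {ptws U -> nat} | {in lp, g =1 f}].
Proof.
rewrite (_ : [set g | _] = [set g : {ptws U -> nat} |
    forall q, q \in [seq (p, f p) | p <- lp] -> g q.1 = q.2]).
  exact: ptws_open_graph.
apply/seteqP; split => g /= h.
  by move=> q /mapP [p hp ->] /=; apply: h.
by move=> p hp; apply: (h (p, f p)); apply/mapP; exists p.
Qed.

End PointwiseNat.

Definition table_of (G : Gspace) : table_space := set_val G.

Lemma table_of_group (G : Gspace) : is_group_table (table_of G).
Proof. by case: G => g h; exact: set_mem h. Qed.

Lemma table_of_inj : injective table_of.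
Proof.
case=> [g1 p1] [g2 p2]; rewrite /table_of !set_valE /= => e; subst g2.
by rewrite (Prop_irrelevance p1 p2).
Qed.

Definition group_of_table (A : table_space) (gA : is_group_table A) : Gspace :=
  exist _ A (mem_set gA).

Definition cylinder (l : seq ((nat * nat) * nat)) : set Gspace :=
  [set G | forall q, q \in l -> table_of G q.1 = q.2].

Lemma cylinder_cat l1 l2 : cylinder (l1 ++ l2) = cylinder l1 `&` cylinder l2.
Proof.
apply/seteqP; split => G.
  by move=> h; split => q hq; apply: h; rewrite mem_cat hq ?orbT.
by move=> [h1 h2] q; rewrite mem_cat => /orP[/h1|/h2].
Qed.

Lemma open_cylinder l : open (cylinder l).
Proof. by exists [set g | forall q, q \in l -> g q.1 = q.2]; first exact: ptws_open_graph. Qed.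

Lemma cylinder_basis (U : set Gspace) G :
  open U -> U G -> exists l, cylinder l G /\ cylinder l `<=` U.
Proof.
move=> [V oV <-] /= VG.
have : nbhs (table_of G) V by apply: open_nbhs_nbhs.
move=> /ptws_nbhs_agree [lp hlp].
exists [seq (p, table_of G p) | p <- lp]; split; first by move=> q /mapP [p _ ->].
move=> G' hG'; apply: hlp => p hp.
by apply: (hG' (p, table_of G p)); apply/mapP; exists p.
Qed.

Definition cyl_closed (N : set Gspace) :=
  forall G, ~ N G -> exists l, cylinder l G /\ cylinder l `<=` ~` N.

Lemma cyl_closedI N1 N2 : cyl_closed N1 -> cyl_closed N2 -> cyl_closed (N1 `&` N2).
Proof.
move=> h1 h2 G /not_andP[/h1|/h2] [l [lG lN]];
  by exists l; split => // G' /lN nN [].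
Qed.

Definition cyl_nowhere_dense (N : set Gspace) :=
  forall l, cylinder l !=set0 ->
    exists l', cylinder (l ++ l') !=set0 /\ cylinder (l ++ l') `<=` ~` N.

Lemma cyl_nowhere_dense_closed N : cyl_closed N ->
  (forall l, cylinder l !=set0 -> ~ cylinder l `<=` N) -> cyl_nowhere_dense N.
Proof.
move=> cN noint l /[dup] /noint /existsNP [G] /not_implyP [lG NG] _.
have [l' [l'G l'N]] := cN G NG.
exists l'; rewrite cylinder_cat; split; first by exists G.
by move=> G' [_ /l'N].
Qed.

Lemma cyl_nowhere_dense_nowhere_dense N : cyl_nowhere_dense N -> nowhere_dense N.
Proof.
move=> hN; apply/seteqP; split => // G.
rewrite /interior /= nbhsE => -[B [oB BG] BN].
have [l [lG lB]] := cylinder_basis oB BG.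
have [l' [[G' l'G'] l'N]] := hN l (ex_intro _ G lG).
have : closure N G' by apply/BN/lB; move: l'G'; rewrite cylinder_cat => -[].
move=> /(_ (cylinder (l ++ l'))) [|z [Nz /l'N //]].
by apply: open_nbhs_nbhs; split => //; exact: open_cylinder.
Qed.

Definition cyl_meager (M : set Gspace) :=
  exists F : nat -> set Gspace, (forall n, cyl_nowhere_dense (F n)) /\
    M `<=` \bigcup_n F n.

Lemma cyl_meagerS M M' : M' `<=` M -> cyl_meager M -> cyl_meager M'.
Proof. by move=> M'M [F [FN MF]]; exists F; split => // G /M'M /MF. Qed.

Lemma cyl_nowhere_dense_meager N : cyl_nowhere_dense N -> cyl_meager N.
Proof. by move=> hN; exists (fun=> N); split => // G NG; exists 0%N. Qed.

Lemma cyl_nowhere_dense0 : cyl_nowhere_dense set0.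
Proof. by move=> l lne; exists [::]; rewrite cats0; split => // G _ []. Qed.

Lemma cyl_meager0 : cyl_meager set0.
Proof. exact: cyl_nowhere_dense_meager cyl_nowhere_dense0. Qed.

Lemma cyl_meager_bigcup (I : countType) (M : I -> set Gspace) :
  (forall i, cyl_meager (M i)) -> cyl_meager (\bigcup_i M i).
Proof.
move=> /choice [F hF].
exists (fun k => if @unpickle (I * nat)%type k is Some (i, n) then F i n else set0).
split.
  move=> k; case: (unpickle k) => [[i n]|]; last exact: cyl_nowhere_dense0.
  by case: (hF i).
move=> G [i _ /(proj2 (hF i)) [n _ FG]].
by exists (pickle (i, n)); rewrite ?pickleK.
Qed.

Lemma cyl_meagerU M1 M2 : cyl_meager M1 -> cyl_meager M2 -> cyl_meager (M1 `|` M2).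
Proof.
move=> h1 h2.
apply: (cyl_meagerS _ (@cyl_meager_bigcup bool (fun b => if b then M1 else M2) _)).
  by move=> G [?|?]; [exists true | exists false].
by case.
Qed.

Lemma cyl_meager_meager M : cyl_meager M -> meager M.
Proof.
move=> [F [FN MF]]; exists (fun n => F n `&` M); split.
  move=> n; apply/cyl_nowhere_dense_nowhere_dense => l /(FN n) [l' [l'N l'F]].
  by exists l'; split => // G /l'F nF [].
apply/seteqP; split => [G MG|G [n _ []//]].
by have [n _ FG] := MF G MG; exists n.
Qed.

Definition nonmeager_locus (Q : set Gspace) : set Gspace :=
  [set G | forall l, cylinder l G -> ~ cyl_meager (cylinder l `&` Q)].

Lemma cyl_closed_nonmeager_locus Q : cyl_closed (nonmeager_locus Q).
Proof.
move=> G /existsNP [l] /not_implyP [lG /contrapT lQ].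
by exists l; split => // G' lG' /(_ l lG').
Qed.

Lemma cyl_meager_setD_nonmeager_locus Q : cyl_meager (Q `\` nonmeager_locus Q).
Proof.
pose M l := if asbool (cyl_meager (cylinder l `&` Q)) then cylinder l `&` Q else set0.
apply: (cyl_meagerS _ (@cyl_meager_bigcup _ M _)).
  move=> G [QG /existsNP [l] /not_implyP [lG /contrapT lQ]].
  by exists l => //; rewrite /M asboolT.
by move=> l; rewrite /M; case: asboolP => // _; exact: cyl_meager0.
Qed.

Definition cyl_closure (Q : set Gspace) : set Gspace :=
  [set G | forall l, cylinder l G -> cylinder l `&` Q !=set0].

Lemma cyl_closure_sub Q : Q `<=` cyl_closure Q.
Proof. by move=> G QG l lG; exists G. Qed.

Lemma cyl_closed_closure Q : cyl_closed (cyl_closure Q).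
Proof.
move=> G /existsNP [l] /not_implyP [lG lQ].
by exists l; split => // G' lG' /(_ l lG') [G'' lQG'']; apply: lQ; exists G''.
Qed.

Section Souslin.
Variable F : seq nat -> set Gspace.
Hypothesis F_closed : forall s, cyl_closed (F s).

Definition souslin : set Gspace :=
  [set G | exists y : nat -> nat, forall n, F (mkseq y n) G].

Definition souslin_from (s : seq nat) : set Gspace :=
  [set G | exists y : nat -> nat, mkseq y (size s) = s /\ forall n, F (mkseq y n) G].

Lemma souslin_from_nil : souslin_from [::] = souslin.
Proof. by apply/seteqP; split => G [y hy]; exists y; [case: hy | split]. Qed.

Lemma souslin_from_rcons s : souslin_from s `<=` \bigcup_k souslin_from (rcons s k).
Proof.
move=> G [y [ys hy]]; exists (y (size s)) => //; exists y; split => //.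
by rewrite size_rcons mkseqS ys.
Qed.

Lemma nonmeager_locus_souslin_from s : nonmeager_locus (souslin_from s) `<=` F s.
Proof.
move=> G LG; apply: contrapT => /F_closed [l [lG lF]].
apply: (LG l lG); apply: cyl_meagerS cyl_meager0 => G' [lG' [y [ys hy]]].
by apply: (lF G' lG'); rewrite -ys; apply: hy.
Qed.

Definition dead_end (s : seq nat) : set Gspace :=
  nonmeager_locus (souslin_from s) `&`
  \bigcap_k ~` nonmeager_locus (souslin_from (rcons s k)).

Lemma cyl_meager_dead_end s : cyl_meager (dead_end s).
Proof.
pose D := cyl_closure (dead_end s).
pose L k := nonmeager_locus (souslin_from (rcons s k)).
have DL_nwd k : cyl_nowhere_dense (D `&` L k).
  apply: cyl_nowhere_dense_closed.
    by apply: cyl_closedI; [exact: cyl_closed_closure | exact: cyl_closed_nonmeager_locus].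
  move=> l [G lG] lDL.
  have [G' [lG' [_ /(_ k I) nLk]]] := (lDL G lG).1 l lG.
  exact/nLk/(lDL G' lG').2.
apply: cyl_meagerS (cyl_nowhere_dense_meager _); first exact: cyl_closure_sub.
apply: cyl_nowhere_dense_closed; first exact: cyl_closed_closure.
(* On a cylinder inside [D], [souslin_from s] is meager, as each of its points
   lies in [souslin_from (rcons s k)] for some [k]; but the cylinder contains a
   dead end, around which [souslin_from s] is not meager. *)
move=> l [G lG] lD.
have [G' [lG' [LG' _]]] := lD G lG l lG.
apply: (LG' l lG').
have := cyl_meagerU
  (cyl_meager_bigcup (fun k => cyl_meager_setD_nonmeager_locus (souslin_from (rcons s k))))
  (cyl_meager_bigcup (fun k => cyl_nowhere_dense_meager (DL_nwd k))).
apply: cyl_meagerS => G'' [lG'' /souslin_from_rcons [k _ Pk]].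
have [Lk|nLk] := pselect (L k G''); last by left; exists k.
by right; exists k => //; split => //; exact: lD.
Qed.

Lemma souslin_of_no_dead_end G :
  nonmeager_locus (souslin_from [::]) G -> ~ (\bigcup_s dead_end s) G -> souslin G.
Proof.
move=> L0 nD.
have step s : exists k, nonmeager_locus (souslin_from s) G ->
    nonmeager_locus (souslin_from (rcons s k)) G.
  have [[k Lk]|nLk] := pselect (exists k, nonmeager_locus (souslin_from (rcons s k)) G).
    by exists k.
  exists 0%N => Ls; exfalso; apply: nD; exists s => //; split => // k _ Lk.
  by apply: nLk; exists k.
have [g hg] := choice step.
(* Follow [g] from [[::]]: every initial segment stays in the non-meager locus. *)
pose S := fix S n := if n is n'.+1 then rcons (S n') (g (S n')) else [::].
have sizeS n : size (S n) = n by elim: n => //= n IH; rewrite size_rcons IH.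
pose y n := nth 0%N (S n.+1) n.
have mkseq_y n : mkseq y n = S n.
  by elim: n => // n IH; rewrite mkseqS IH /y /= nth_rcons sizeS ltnn eqxx.
have LS n : nonmeager_locus (souslin_from (S n)) G by elim: n => //= n IH; apply: hg.
by exists y => n; rewrite mkseq_y; apply: nonmeager_locus_souslin_from.
Qed.

(* The Baire property of Souslin sets of closed sets. *)
Lemma cyl_meager_souslin :
  (forall l, cylinder l !=set0 -> ~ cyl_meager (cylinder l `\` souslin)) ->
  cyl_meager souslin.
Proof.
move=> hyp.
have L0_nwd : cyl_nowhere_dense (nonmeager_locus (souslin_from [::])).
  apply: cyl_nowhere_dense_closed; first exact: cyl_closed_nonmeager_locus.
  move=> l lne lL; apply: (hyp l lne).
  apply: cyl_meagerS (cyl_meager_bigcup cyl_meager_dead_end) => G [lG nA].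
  by apply: contrapT => nD; apply/nA/souslin_of_no_dead_end/nD/lL.
apply: cyl_meagerS (cyl_meagerU (cyl_meager_setD_nonmeager_locus (souslin_from [::]))
  (cyl_nowhere_dense_meager L0_nwd)) => G AG.
have [L|nL] := pselect (nonmeager_locus (souslin_from [::]) G); first by right.
by left; split => //; rewrite souslin_from_nil.
Qed.

End Souslin.

Record relabelling := Relabelling {
  rl_fun : nat -> nat;
  rl_inv : nat -> nat;
  rl_funK : cancel rl_fun rl_inv;
  rl_invK : cancel rl_inv rl_fun;
  rl_fun0 : rl_fun 0 = 0 }.

Lemma rl_inv0 s : rl_inv s 0 = 0.
Proof. by rewrite -{1}(rl_fun0 s) rl_funK. Qed.

Definition rl_inverse s : relabelling :=
  Relabelling (rl_invK s) (rl_funK s) (rl_inv0 s).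

Definition relabel_table s (A : table_space) : table_space :=
  fun p => rl_fun s (A (rl_inv s p.1, rl_inv s p.2)).

Lemma relabel_table_group s A : is_group_table A -> is_group_table (relabel_table s A).
Proof.
move=> [assoc unit inv]; split.
- by move=> x y z; rewrite /relabel_table /= !rl_funK assoc.
- by move=> x; rewrite /relabel_table /= rl_inv0 (unit _).1 (unit _).2 !rl_invK.
- move=> x; have [y [yx xy]] := inv (rl_inv s x); exists (rl_fun s y).
  by rewrite /relabel_table /= rl_funK yx xy rl_fun0.
Qed.

Lemma table_of_group_of_table A (gA : is_group_table A) :
  table_of (group_of_table gA) = A.
Proof. by rewrite /table_of set_valE. Qed.

Definition relabel s (G : Gspace) : Gspace :=
  group_of_table (relabel_table_group s (table_of_group G)).

Lemma table_of_relabel s G : table_of (relabel s G) = relabel_table s (table_of G).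
Proof. exact: table_of_group_of_table. Qed.

Lemma relabelK s : cancel (relabel s) (relabel (rl_inverse s)).
Proof.
move=> G; apply: table_of_inj; apply: funext => -[i j].
by rewrite !table_of_relabel /relabel_table /= !rl_funK.
Qed.

Lemma relabelKV s : cancel (relabel (rl_inverse s)) (relabel s).
Proof.
move=> G; apply: table_of_inj; apply: funext => -[i j].
by rewrite !table_of_relabel /relabel_table /= !rl_invK.
Qed.

Definition relabel_entries s (l : seq ((nat * nat) * nat)) :=
  [seq ((rl_fun s q.1.1, rl_fun s q.1.2), rl_fun s q.2) | q <- l].

Lemma relabel_entries_cat s l1 l2 :
  relabel_entries s (l1 ++ l2) = relabel_entries s l1 ++ relabel_entries s l2.
Proof. exact: map_cat. Qed.

Lemma relabel_entriesK s : cancel (relabel_entries s) (relabel_entries (rl_inverse s)).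
Proof. by elim=> //= -[[i j] v] l IH; rewrite IH /= !rl_funK. Qed.

Lemma relabel_entriesKV s : cancel (relabel_entries (rl_inverse s)) (relabel_entries s).
Proof. by elim=> //= -[[i j] v] l IH; rewrite IH /= !rl_invK. Qed.

Lemma relabel_cylinder s l G : cylinder l G -> cylinder (relabel_entries s l) (relabel s G).
Proof.
move=> lG q /mapP [[[i j] v] hq ->] /=.
by rewrite table_of_relabel /relabel_table /= !rl_funK (lG _ hq).
Qed.

Lemma preimage_relabel_cylinder s l :
  relabel s @^-1` cylinder (relabel_entries s l) = cylinder l.
Proof.
apply/seteqP; split => G; last exact: relabel_cylinder.
by move=> /(@relabel_cylinder (rl_inverse s)); rewrite relabelK relabel_entriesK.
Qed.

Lemma cyl_nowhere_dense_relabel s N :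
  cyl_nowhere_dense N -> cyl_nowhere_dense (relabel s @^-1` N).
Proof.
move=> hN l [G lG].
have [l'' [l''ne l''N]] := hN _ (ex_intro _ _ (@relabel_cylinder s _ _ lG)).
have sl' : cylinder (l ++ relabel_entries (rl_inverse s) l'') =
    relabel s @^-1` cylinder (relabel_entries s l ++ l'').
  by rewrite -{2}(relabel_entriesKV s l'') -relabel_entries_cat preimage_relabel_cylinder.
exists (relabel_entries (rl_inverse s) l''); rewrite sl'; split => [|G' /l''N //].
by case: l''ne => G'' ?; exists (relabel (rl_inverse s) G''); rewrite /= relabelKV.
Qed.

Lemma cyl_meager_relabel s M : cyl_meager M -> cyl_meager (relabel s @^-1` M).
Proof.
move=> [F [FN MF]]; exists (fun n => relabel s @^-1` F n); split => [n|G /MF //].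
exact: cyl_nowhere_dense_relabel.
Qed.

Definition swap (u v x : nat) := if x == u then v else if x == v then u else x.

Lemma swap_l u v : swap u v u = v.
Proof. by rewrite /swap eqxx. Qed.

Lemma swap_r u v : swap u v v = u.
Proof. by rewrite /swap eqxx; case: eqP. Qed.

Lemma swap_id u v x : x != u -> x != v -> swap u v x = x.
Proof. by move=> xu xv; rewrite /swap (negbTE xu) (negbTE xv). Qed.

Lemma swapK u v : involutive (swap u v).
Proof.
move=> x; have [->|xu] := eqVneq x u; first by rewrite swap_l swap_r.
have [->|xv] := eqVneq x v; first by rewrite swap_r swap_l.
by rewrite !swap_id.
Qed.

Lemma extend_finite_bijection (ps : seq (nat * nat)) :
  {in ps &, forall p p', (p.1 == p'.1) = (p.2 == p'.2)} ->
  exists2 f : nat -> nat, bijective f & {in ps, forall p, f p.1 = p.2}.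
Proof.
elim: ps => [|[a b] ps IH] hps; first by exists id => //; exists id.
have [f [g fK gK] hf] : exists2 f : nat -> nat, bijective f & {in ps, forall p, f p.1 = p.2}.
  by apply: IH => p p' hp hp'; apply: hps; rewrite inE ?hp ?hp' orbT.
exists (swap (f a) b \o f).
  by exists (g \o swap (f a) b) => x /=; rewrite ?swapK ?fK ?gK ?swapK.
move=> [a' b']; rewrite inE => /orP[/eqP [-> ->]|hin] /=; first exact: swap_l.
have := hps (a, b) (a', b') (mem_head _ _); rewrite inE hin orbT => /(_ isT) /= hab.
have fa' : f a' = b' := hf _ hin.
have [bb'|bb'] := eqVneq b b'.
  by move: hab; rewrite -bb' eqxx => /eqP <-; rewrite swap_l.
rewrite -fa' swap_id //; first by rewrite (inj_eq (can_inj fK)) eq_sym hab.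
by rewrite fa' eq_sym.
Qed.

Lemma pairing_extending_column (T : seq nat) :
  exists2 beta : nat -> nat * nat, bijective beta & {in T, forall n, beta n = (0, n)}.
Proof.
pose ps := [seq (Cantor.to_nat (0, n), n) | n <- T].
have ps_inj : {in ps &, forall p p', (p.1 == p'.1) = (p.2 == p'.2)}.
  have to_nat_inj : injective Cantor.to_nat := can_inj Cantor.cancel_of_to.
  move=> _ _ /mapP [n _ ->] /mapP [n' _ ->].
  by rewrite (inj_eq to_nat_inj) xpair_eqE eqxx.
have [tau [tau' tauK tau'K] htau] := extend_finite_bijection ps_inj.
exists (Cantor.of_nat \o tau').
  exists (tau \o Cantor.to_nat) => x; rewrite /comp.
    by rewrite Cantor.cancel_to_of tau'K.
  by rewrite tauK Cantor.cancel_of_to.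
move=> n hn; have tau_n : tau (Cantor.to_nat (0, n)) = n.
  by apply: (htau (Cantor.to_nat (0, n), n)); apply: map_f.
by rewrite /comp -{1}tau_n tauK Cantor.cancel_of_to.
Qed.

Section ProductTable.
Variables (beta : nat -> nat * nat) (beta' : nat * nat -> nat).
Hypotheses (betaK : cancel beta beta') (beta'K : cancel beta' beta).
Hypothesis beta0 : beta 0 = (0, 0).

Definition prod_table (A1 A2 : table_space) : table_space := fun p =>
  beta' (A1 ((beta p.1).1, (beta p.2).1), A2 ((beta p.1).2, (beta p.2).2)).

Lemma prod_table_group A1 A2 :
  is_group_table A1 -> is_group_table A2 -> is_group_table (prod_table A1 A2).
Proof.
move=> [assoc1 unit1 inv1] [assoc2 unit2 inv2]; split.
- by move=> x y z; rewrite /prod_table /= !beta'K /= assoc1 assoc2.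
- move=> x; rewrite /prod_table /= beta0 /= (unit1 _).1 (unit2 _).1.
  by rewrite (unit1 _).2 (unit2 _).2 -surjective_pairing betaK.
- move=> x; have [y1 [xy1 y1x]] := inv1 (beta x).1; have [y2 [xy2 y2x]] := inv2 (beta x).2.
  by exists (beta' (y1, y2)); rewrite /prod_table /= beta'K /= xy1 xy2 y1x y2x -beta0 betaK.
Qed.

End ProductTable.

Definition entry_labels (l : seq ((nat * nat) * nat)) : seq nat :=
  flatten [seq [:: q.1.1; q.1.2; q.2] | q <- l].

Lemma entry_labelsP l i j v : ((i, j), v) \in l ->
  [/\ i \in entry_labels l, j \in entry_labels l & v \in entry_labels l].
Proof.
by move=> hq; split; apply/flatten_mapP; exists ((i, j), v); rewrite // !inE eqxx ?orbT.
Qed.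

(* Witness: the direct product G1 x G2, numbered so that its subgroup 1 x G2
   keeps the labels of [l2]; the relabelling moves G1 onto G1 x 1. *)
Lemma relabel_meets l1 l2 : cylinder l1 !=set0 -> cylinder l2 !=set0 ->
  exists s, cylinder (l2 ++ relabel_entries s l1) !=set0.
Proof.
move=> [G1 l1G1] [G2 l2G2].
have [beta [beta' betaK beta'K] beta_l2] := pairing_extending_column (0 :: entry_labels l2).
have beta0 : beta 0 = (0, 0) by apply: beta_l2; rewrite mem_head.
have [f [f' fK f'K] f_l1] : exists2 f : nat -> nat, bijective f &
    {in 0 :: entry_labels l1, forall i, f i = beta' (i, 0)}.
  pose ps := [seq (i, beta' (i, 0)) | i <- 0 :: entry_labels l1].
  have ps_inj : {in ps &, forall p p', (p.1 == p'.1) = (p.2 == p'.2)}.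
    move=> _ _ /mapP [i _ ->] /mapP [i' _ ->] /=.
    have beta'_inj : injective beta' := can_inj beta'K.
    by apply/eqP/eqP => [-> | /beta'_inj []].
  have [f bij_f hf] := extend_finite_bijection ps_inj.
  by exists f => // i hi; apply: (hf (i, _)); apply: map_f.
have f0 : f 0 = 0 by rewrite f_l1 ?mem_head // -beta0 betaK.
exists (Relabelling fK f'K f0).
have [_ unit1 _] := table_of_group G1; have [_ unit2 _] := table_of_group G2.
have G12 := prod_table_group betaK beta'K beta0 (table_of_group G1) (table_of_group G2).
exists (group_of_table G12); rewrite cylinder_cat; split.
  move=> [[i j] v] /[dup] /entry_labelsP [hi hj hv] hq.
  rewrite table_of_group_of_table /prod_table /= !beta_l2 ?inE ?hi ?hj ?orbT //=.
  by rewrite (unit1 _).1 (l2G2 _ hq) -(beta_l2 v) ?inE ?hv ?orbT.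
move=> q /mapP [[[i j] v] /[dup] /entry_labelsP [hi hj hv] hq ->] /=.
rewrite table_of_group_of_table /prod_table /= !f_l1 ?inE ?hi ?hj ?hv ?orbT //.
by rewrite !beta'K /= (unit2 _).1 (l1G1 _ hq).
Qed.

Section RelabellingInvariant.
Variable A : set Gspace.
Hypothesis A_relabel : forall s G, A G -> A (relabel s G).

Lemma cyl_meager_relabel_entries s l :
  cyl_meager (cylinder l `\` A) -> cyl_meager (cylinder (relabel_entries s l) `\` A).
Proof.
move=> /(cyl_meager_relabel (rl_inverse s)); apply: cyl_meagerS => G [lG nAG]; split.
  by move: (@relabel_cylinder (rl_inverse s) _ _ lG); rewrite relabel_entriesK.
by move=> /(A_relabel s); rewrite relabelKV.
Qed.

Lemma cyl_meagerC_of_locally_comeager l :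
  cylinder l !=set0 -> cyl_meager (cylinder l `\` A) -> cyl_meager (~` A).
Proof.
move=> lne lA.
have L_nwd : cyl_nowhere_dense (nonmeager_locus (~` A)).
  apply: cyl_nowhere_dense_closed; first exact: cyl_closed_nonmeager_locus.
  (* Every nonempty cylinder meets a relabelled copy of [l], where [A] is comeager. *)
  move=> l' l'ne l'L.
  have [s [G]] := relabel_meets lne l'ne; rewrite cylinder_cat => -[l'G slG].
  exact: (l'L G l'G _ slG (cyl_meager_relabel_entries s lA)).
apply: cyl_meagerS (cyl_meagerU (cyl_meager_setD_nonmeager_locus (~` A))
  (cyl_nowhere_dense_meager L_nwd)) => G nAG.
by have [L|nL] := pselect (nonmeager_locus (~` A) G); [right | left].
Qed.

End RelabellingInvariant.

Section Embeddings.
Variables (H : Type) (mul : H -> H -> H).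

Lemma E_set_relabel s G : E_set mul G -> E_set mul (relabel s G).
Proof.
move=> [phi [phi_inj phiM]]; exists (rl_fun s \o phi); split.
  by move=> a b /(can_inj (rl_funK s)) /phi_inj.
move=> a b; change (set_val (relabel s G)) with (table_of (relabel s G)).
by rewrite table_of_relabel /relabel_table /= !rl_funK phiM.
Qed.

Variable e : nat -> H.
Hypothesis e_surj : forall h, exists m, e m = h.

(* [s] lists the would-be images of [e 0], ..., [e (size s).-1]. *)
Definition embedding_scheme (s : seq nat) : set Gspace := [set G |
  forall m n k, (m < size s)%N -> (n < size s)%N -> (k < size s)%N ->
    (nth 0 s m = nth 0 s n <-> e m = e n) /\
    (mul (e m) (e n) = e k -> table_of G (nth 0 s m, nth 0 s n) = nth 0 s k)].

Lemma cyl_closed_embedding_scheme s : cyl_closed (embedding_scheme s).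
Proof.
move=> G /existsNP [m] /existsNP [n] /existsNP [k].
move=> /not_implyP [hm] /not_implyP [hn] /not_implyP [hk] hno.
have [e_iff|e_niff] := pselect (nth 0 s m = nth 0 s n <-> e m = e n); last first.
  by exists [::]; split => // G' _ /(_ m n k hm hn hk) [].
set x := nth 0 s m; set y := nth 0 s n.
exists [:: ((x, y), table_of G (x, y))]; split; first by move=> q; rewrite inE => /eqP ->.
move=> G' G'xy /(_ m n k hm hn hk) [_ hmul]; apply: hno; split => // emn.
by have /= <- := G'xy _ (mem_head _ _); apply: hmul.
Qed.

Lemma E_set_souslin : E_set mul = souslin embedding_scheme.
Proof.
apply/seteqP; split => G.
  move=> [phi [phi_inj phiM]]; exists (phi \o e) => N m n k hm hn hk.
  rewrite size_mkseq in hm hn hk; rewrite !nth_mkseq //=; split.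
    by split => [/phi_inj|->].
  by move=> <-; rewrite phiM.
move=> [y hy].
have [idx idxK] := choice e_surj.
have y_emb m n k : (y m = y n <-> e m = e n) /\
    (mul (e m) (e n) = e k -> table_of G (y m, y n) = y k).
  have := hy (m + n + k).+1 m n k; rewrite size_mkseq !nth_mkseq; try lia.
  by apply; lia.
exists (y \o idx); split.
  by move=> a b /(proj1 (y_emb (idx a) (idx b) 0%N)); rewrite !idxK.
by move=> a b; symmetry; apply: (proj2 (y_emb _ _ (idx (mul a b)))); rewrite !idxK.
Qed.

Lemma E_set_dichotomy : cyl_meager (E_set mul) \/ cyl_meager (~` E_set mul).
Proof.
have [[l [lne lE]]|nloc] :=
  pselect (exists l, cylinder l !=set0 /\ cyl_meager (cylinder l `\` E_set mul)).
  by right; exact: (@cyl_meagerC_of_locally_comeager _ (@E_set_relabel) l).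
left; rewrite E_set_souslin; apply: cyl_meager_souslin.
  exact: cyl_closed_embedding_scheme.
by move=> l lne lE; apply: nloc; exists l; rewrite E_set_souslin.
Qed.

End Embeddings.

Definition Baire := {ptws nat -> nat}.

Section BaireMetric.
Local Open Scope ring_scope.
Local Notation R := Rdefinitions.R.

Definition first_diff (x y : nat -> nat) : nat :=
  xget 0%N [set k | x k <> y k /\ forall i, (i < k)%N -> x i = y i].

Lemma first_diffP (x y : nat -> nat) : x <> y ->
  x (first_diff x y) <> y (first_diff x y) /\
  forall i, (i < first_diff x y)%N -> x i = y i.
Proof.
move=> nxy; apply: (@xgetPex _ 0%N [set k | x k <> y k /\ forall i, (i < k)%N -> x i = y i]).
have [k xyk] : exists k, x k != y k.
  apply: contrapT => /forallNP h; apply/nxy/funext => k.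
  by apply/eqP; apply: contrapT => /negP /h.
case: (ex_minnP (ex_intro (fun k => x k != y k) k xyk)) => m /eqP xym m_min.
exists m; split => // i im; apply/eqP; apply: contrapT => /negP /m_min.
by rewrite leqNgt im.
Qed.

Lemma first_diffC x y : first_diff x y = first_diff y x.
Proof.
by rewrite /first_diff; congr xget; apply/seteqP; split => k /= [xyk xy];
  split => [e|i /xy //]; apply: xyk.
Qed.

Definition baire_dist (x y : Baire) : R :=
  if pselect (x = y) is left _ then 0 else ((first_diff x y).+1%:R)^-1.

Lemma baire_dist_lt (n : nat) (x y : Baire) :
  baire_dist x y < (n.+1%:R)^-1 <-> forall i, (i <= n)%N -> x i = y i.
Proof.
rewrite /baire_dist; case: pselect => [->|nxy]; first by split => // _; rewrite invr_gt0 ltr0n.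
have [xy_diff xy_eq] := first_diffP nxy.
rewrite ltf_pV2 ?posrE ?ltr0n // ltr_nat ltnS; split.
  by move=> hn i hi; apply: xy_eq; apply: leq_ltn_trans hi hn.
by move=> h; rewrite ltnNge; apply/negP => hm; apply/xy_diff/h.
Qed.

Lemma baire_dist_ge0 x y : 0 <= baire_dist x y.
Proof. by rewrite /baire_dist; case: pselect => // _; rewrite invr_ge0 ler0n. Qed.

Lemma baire_dist_eq0 x y : baire_dist x y = 0 <-> x = y.
Proof.
rewrite /baire_dist; case: pselect => [->//|nxy]; split => // /eqP.
by rewrite invr_eq0 pnatr_eq0.
Qed.

Lemma baire_distxx x : baire_dist x x = 0.
Proof. exact/baire_dist_eq0. Qed.

Lemma baire_distC x y : baire_dist x y = baire_dist y x.
Proof.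
rewrite /baire_dist; case: pselect => [->|nxy]; case: pselect => // [/esym //|_].
by rewrite first_diffC.
Qed.

(* The metric is an ultrametric: the first difference between [x] and [z]
   comes no earlier than the first difference along [x, y] or [y, z]. *)
Lemma baire_dist_triangle x y z : baire_dist x z <= baire_dist x y + baire_dist y z.
Proof.
have [<-|nxz] := pselect (x = z); first by rewrite baire_distxx addr_ge0 ?baire_dist_ge0.
have [<-|nxy] := pselect (x = y); first by rewrite baire_distxx add0r.
have [<-|nyz] := pselect (y = z); first by rewrite baire_distxx addr0.
have [_ xy_eq] := first_diffP nxy; have [_ yz_eq] := first_diffP nyz.
have [xz_diff _] := first_diffP nxz.
rewrite /baire_dist; do 3 case: pselect => // _.
have min_le : (minn (first_diff x y) (first_diff y z) <= first_diff x z)%N.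
  rewrite leqNgt; apply/negP => hlt; apply: xz_diff.
  rewrite xy_eq; last exact: leq_trans hlt (geq_minl _ _).
  by rewrite yz_eq //; apply: leq_trans hlt (geq_minr _ _).
have inv_le m : (m <= first_diff x z)%N -> (first_diff x z).+1%:R^-1 <= m.+1%:R^-1 :> R.
  by move=> hm; rewrite lef_pV2 ?posrE ?ltr0n // ler_nat ltnS.
case: (leqP (first_diff x y) (first_diff y z)) => hab.
  move: min_le; rewrite (minn_idPl hab) => /inv_le /le_trans; apply.
  by rewrite lerDl invr_ge0 ler0n.
move: min_le; rewrite (minn_idPr (ltnW hab)) => /inv_le /le_trans; apply.
by rewrite lerDr invr_ge0 ler0n.
Qed.

Lemma exists_inv_succ_lt (e : R) : 0 < e -> exists n : nat, (n.+1%:R)^-1 < e.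
Proof.
move=> e0; exists (Num.truncn e^-1).
by rewrite invf_plt ?posrE ?ltr0n //; exact: truncnS_gt.
Qed.

Lemma baire_dist_open (U : set Baire) : open U <->
  (forall x, U x -> exists2 e : R, 0 < e & forall y, baire_dist x y < e -> U y).
Proof.
split.
  move=> oU x Ux.
  have /ptws_nbhs_agree [lp hlp] : nbhs x U by apply: open_nbhs_nbhs.
  exists (((\max_(p <- lp) p).+1%:R)^-1); first by rewrite invr_gt0 ltr0n.
  move=> y /baire_dist_lt xy; apply: hlp => p hp; apply/esym/xy.
  exact: (leq_bigmax_seq p hp).
move=> hU; rewrite openE => x Ux.
have [e e0 he] := hU x Ux.
have [n ne] := exists_inv_succ_lt e0.
have : nbhs x [set g : Baire | {in iota 0 n.+1, g =1 x}].
  by apply: open_nbhs_nbhs; split; [exact: ptws_open_agree|].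
apply: filterS => y hy; apply/he/lt_trans/ne.
by apply/baire_dist_lt => i hi; apply/esym/hy; rewrite mem_iota.
Qed.

Lemma baire_dist_complete (u : nat -> Baire) :
  (forall e : R, 0 < e ->
     exists N, forall m n, (N <= m)%N -> (N <= n)%N -> baire_dist (u m) (u n) < e) ->
  exists x, forall e : R, 0 < e ->
     exists N, forall n, (N <= n)%N -> baire_dist (u n) x < e.
Proof.
move=> u_cauchy.
have [N hN] := choice (fun i : nat => u_cauchy (i.+1%:R^-1) ltac:(by rewrite invr_gt0 ltr0n)).
exists (fun i => u (N i) i) => e e0.
have [L hL] := exists_inv_succ_lt e0.
exists (N L) => n hn; apply: lt_trans hL; apply/baire_dist_lt => i hi.
pose M := maxn (N i) (N L).
rewrite (proj1 (baire_dist_lt _ _ _) (hN L n M hn (leq_maxr _ _)) i hi).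
exact: (proj1 (baire_dist_lt _ _ _) (hN i M (N i) (leq_maxl _ _) (leqnn _)) i (leqnn _)).
Qed.

Lemma Baire_polish : polish Baire.
Proof.
split.
  exists ((fun s : seq nat => (nth 0%N s : Baire)) @` setT); split.
    by apply: card_le_trans (card_image_le _ _) _; exact: countableP.
  apply/seteqP; split => // x _ B /ptws_nbhs_agree [lp hlp].
  pose m := (\max_(p <- lp) p).+1.
  exists (nth 0%N (mkseq x m)); split; first by exists (mkseq x m).
  apply: hlp => p hp; rewrite nth_mkseq // ltnS; exact: (leq_bigmax_seq p hp).
exists baire_dist; split.
- by move=> x y; split; [exact: baire_dist_ge0 | exact: baire_dist_eq0].
- exact: baire_distC.
- exact: baire_dist_triangle.
- exact: baire_dist_open.
- exact: baire_dist_complete.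
Qed.

End BaireMetric.

Section BorelSets.
Variable P : topologicalType.

Lemma borel_set_open (S : set P) : open S -> borel_set S.
Proof. exact: (@sub_sigma_algebra P setT [set U : set P | open U]). Qed.

Lemma borel_setC (S : set P) : borel_set S -> borel_set (~` S).
Proof. by move=> /(@sigma_algebraCD P setT [set U : set P | open U]); rewrite setTD. Qed.

Lemma borel_set_exists (S : nat -> set P) :
  (forall n, borel_set (S n)) -> borel_set [set x | exists n, S n x].
Proof.
move=> /sigma_algebra_bigcup; rewrite /borel_set; congr (<<s _ >> _).
by apply/seteqP; split => x [n]; exists n.
Qed.

Lemma borel_set_forall (S : nat -> set P) :
  (forall n, borel_set (S n)) -> borel_set [set x | forall n, S n x].
Proof.
move=> BS; have := borel_setC (borel_set_exists (fun n => borel_setC (BS n))).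
congr borel_set; apply/seteqP; split => x.
  by move=> nSx n; apply: contrapT => nS; apply: nSx; exists n.
by move=> Sx [n /(_ (Sx n))].
Qed.

Lemma borel_setI (S T : set P) : borel_set S -> borel_set T -> borel_set (S `&` T).
Proof.
move=> BS BT; have ST : forall n, borel_set (if n is 0%N then S else T) by case.
have := borel_set_forall ST; congr borel_set; apply/seteqP; split => x.
  by move=> STx; split; [exact: STx 0%N | exact: STx 1%N].
by move=> [Sx Tx] [].
Qed.

End BorelSets.

Definition locally_constant (T : Type) (F : Baire -> T) :=
  forall x : Baire, exists lp : seq nat, forall y : Baire, {in lp, y =1 x} -> F y = F x.

Lemma locally_constant_cst (T : Type) (c : T) : locally_constant (fun=> c).
Proof. by move=> x; exists [::]. Qed.

Lemma locally_constant2 (T1 T2 T : Type) (h : T1 -> T2 -> T) F1 F2 :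
  locally_constant F1 -> locally_constant F2 -> locally_constant (fun x => h (F1 x) (F2 x)).
Proof.
move=> lc1 lc2 x; have [l1 k1] := lc1 x; have [l2 k2] := lc2 x.
exists (l1 ++ l2) => y yx.
by rewrite k1 ?k2 // => p hp; apply: yx; rewrite mem_cat hp ?orbT.
Qed.

Lemma locally_constant_eval (F : Baire -> nat) :
  locally_constant F -> locally_constant (fun x => x (F x)).
Proof.
move=> lcF x; have [lp hlp] := lcF x; exists (F x :: lp) => y yx.
by rewrite hlp ?yx ?mem_head // => p hp; apply: yx; rewrite inE hp orbT.
Qed.

Lemma open_locally_constant (S : Baire -> Prop) : locally_constant S -> open (S : set Baire).
Proof.
move=> lcS; rewrite openE => x Sx.
have [lp hlp] := lcS x.
have : nbhs x [set g : Baire | {in lp, g =1 x}].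
  by apply: open_nbhs_nbhs; split; [exact: ptws_open_agree|].
by apply: filterS => y /hlp ->.
Qed.

(* Locally constant predicates are clopen. *)
Lemma borel_locally_constant (S : Baire -> Prop) : locally_constant S -> borel_set (S : set Baire).
Proof.
move=> lcS; rewrite -[S]setCK; apply: borel_setC; apply: borel_set_open.
exact: open_locally_constant (locally_constant2 (fun P _ => ~ P) lcS lcS).
Qed.

Definition coded_table (x : Baire) : table_space := fun p => x (pickle (@inl _ nat p)).

Definition coded_label (x : Baire) (m : nat) : nat := x (pickle (@inr (nat * nat) _ m)).

Lemma locally_constant_coded_table (F1 F2 : Baire -> nat) :
  locally_constant F1 -> locally_constant F2 ->
  locally_constant (fun x => coded_table x (F1 x, F2 x)).
Proof.
move=> lc1 lc2; apply: (locally_constant_eval (F := fun x => pickle (@inl _ nat (F1 x, F2 x)))).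
exact: (locally_constant2 (fun a b => pickle (@inl _ nat (a, b))) lc1 lc2).
Qed.

Lemma locally_constant_coded_label (F : Baire -> nat) :
  locally_constant F -> locally_constant (fun x => coded_label x (F x)).
Proof.
move=> lcF; apply: (locally_constant_eval (F := fun x => pickle (@inr (nat * nat) _ (F x)))).
exact: (locally_constant2 (fun a _ => pickle (@inr (nat * nat) _ a)) lcF lcF).
Qed.

Lemma locally_constant_eq (F1 F2 : Baire -> nat) :
  locally_constant F1 -> locally_constant F2 -> locally_constant (fun x => F1 x = F2 x).
Proof. exact: locally_constant2. Qed.

Ltac locally_constant_tac :=
  repeat first [ apply: locally_constant_coded_table | apply: locally_constant_coded_label
               | apply: locally_constant_cst ].

Lemma borel_group_table : borel_set [set x : Baire | is_group_table (coded_table x)].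
Proof.
have assoc : borel_set [set x : Baire | forall a b c,
    coded_table x (coded_table x (a, b), c) = coded_table x (a, coded_table x (b, c))].
  apply: borel_set_forall => a; apply: borel_set_forall => b; apply: borel_set_forall => c.
  by apply: borel_locally_constant; apply: locally_constant_eq; locally_constant_tac.
have unit : borel_set [set x : Baire | forall a,
    coded_table x (0%N, a) = a /\ coded_table x (a, 0%N) = a].
  apply: borel_set_forall => a; apply: borel_locally_constant; apply: (locally_constant2 and);
    apply: locally_constant_eq; locally_constant_tac.
have inv : borel_set [set x : Baire | forall a, exists b,
    coded_table x (a, b) = 0%N /\ coded_table x (b, a) = 0%N].
  apply: borel_set_forall => a; apply: borel_set_exists => b.
  apply: borel_locally_constant; apply: (locally_constant2 and);
    apply: locally_constant_eq; locally_constant_tac.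
have := borel_setI assoc (borel_setI unit inv).
congr borel_set; apply/seteqP; split => x /=; first by case=> a [b c]; split.
by case=> a b c; split; [exact: a | split; [exact: b | exact: c]].
Qed.

(* [(N, xor)] is the group [(Z/2Z)^(N)]; it serves as a default value. *)
Definition xor_table : table_space := fun p => Nat.lxor p.1 p.2.

Lemma xor_table_group : is_group_table xor_table.
Proof.
split.
- by move=> x y z; rewrite /xor_table /= PeanoNat.Nat.lxor_assoc.
- by move=> x; rewrite /xor_table /= PeanoNat.Nat.lxor_0_l PeanoNat.Nat.lxor_0_r.
- by move=> x; exists x; rewrite /xor_table /= PeanoNat.Nat.lxor_nilpotent.
Qed.

Definition decode (x : Baire) : Gspace :=
  if pselect (is_group_table (coded_table x)) is left gx then group_of_table gx
  else group_of_table xor_table_group.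

Lemma table_of_decode x : is_group_table (coded_table x) -> table_of (decode x) = coded_table x.
Proof. by rewrite /decode; case: pselect => // gx _; rewrite table_of_group_of_table. Qed.

Lemma decode_continuous (B : set Baire) :
  B `<=` [set x | is_group_table (coded_table x)] -> {within B, continuous decode}.
Proof.
move=> Bg; apply/subspace_continuousP => x Bx W.
rewrite nbhsE => -[V [oV Vx] VW].
have [l [lx lV]] := cylinder_basis oV Vx.
rewrite nbhs_simpl /=.
have : nbhs x [set g : Baire | {in [seq pickle (@inl _ nat q.1) | q <- l], g =1 x}].
  by apply: open_nbhs_nbhs; split; [exact: ptws_open_agree|].
apply: filterS => y xy By; apply/VW/lV => q hq.
rewrite table_of_decode; last exact: Bg.
rewrite -(lx q hq) table_of_decode; last exact: Bg.
by rewrite /coded_table xy //; apply: map_f.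
Qed.

Section EmbeddingCodes.
Variables (H : Type) (mul : H -> H -> H) (e : nat -> H).
Hypothesis e_surj : forall h, exists m, e m = h.

Definition embedding_codes : set Baire := [set x |
  [/\ is_group_table (coded_table x),
      forall m n, coded_label x m = coded_label x n <-> e m = e n &
      forall m n k, mul (e m) (e n) = e k ->
        coded_table x (coded_label x m, coded_label x n) = coded_label x k]].

Lemma borel_embedding_codes : borel_set embedding_codes.
Proof.
have labels_inj : borel_set [set x : Baire |
    forall m n, coded_label x m = coded_label x n <-> e m = e n].
  apply: borel_set_forall => m; apply: borel_set_forall => n.
  apply: borel_locally_constant; apply: (locally_constant2 iff); last exact: locally_constant_cst.
  by apply: locally_constant_eq; locally_constant_tac.
have labels_hom : borel_set [set x : Baire | forall m n k, mul (e m) (e n) = e k ->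
    coded_table x (coded_label x m, coded_label x n) = coded_label x k].
  apply: borel_set_forall => m; apply: borel_set_forall => n; apply: borel_set_forall => k.
  apply: borel_locally_constant; apply: (locally_constant2 (fun P Q => P -> Q)).
    exact: locally_constant_cst.
  by apply: locally_constant_eq; locally_constant_tac.
have := borel_setI borel_group_table (borel_setI labels_inj labels_hom).
congr borel_set; apply/seteqP; split => x /=; first by case=> a [b c]; split.
by case=> a b c; split; [exact: a | split; [exact: b | exact: c]].
Qed.

Lemma decode_embedding_codes : decode @` embedding_codes = E_set mul.
Proof.
have [idx idxK] := choice e_surj.
apply/seteqP; split => G.
  move=> [x [gx label_inj label_hom] <-].
  exists (coded_label x \o idx); split.
    by move=> a b /label_inj; rewrite !idxK.
  move=> a b; change (set_val (decode x)) with (table_of (decode x)).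
  by rewrite table_of_decode //= (label_hom (idx a) (idx b) (idx (mul a b))) ?idxK.
move=> [phi [phi_inj phiM]].
pose x : Baire := fun n => match @unpickle ((nat * nat) + nat)%type n with
  | Some (inl p) => table_of G p | Some (inr m) => phi (e m) | None => 0%N end.
have x_table : coded_table x = table_of G by apply: funext => p; rewrite /coded_table /x pickleK.
have x_label m : coded_label x m = phi (e m) by rewrite /coded_label /x pickleK.
have gx : is_group_table (coded_table x) by rewrite x_table; exact: table_of_group.
exists x; last by apply: table_of_inj; rewrite table_of_decode.
split => // [m n | m n k emn]; rewrite !x_label; first by split => [/phi_inj|->].
by rewrite x_table -emn phiM.
Qed.

Lemma analytic_E_set : analytic (E_set mul).
Proof.
exists Baire, embedding_codes, decode; split.
- exact: Baire_polish.
- exact: borel_embedding_codes.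
- by apply: decode_continuous => x [].
- exact: decode_embedding_codes.
Qed.

End EmbeddingCodes.

Lemma enumeration_of_embeddable (H : Type) (mul : H -> H -> H) (h0 : H) G :
  E_set mul G -> exists e : nat -> H, forall h, exists m, e m = h.
Proof.
move=> [phi [phi_inj _]].
exists (fun n => if pselect (exists h, phi h = n) is left ex then projT1 (cid ex) else h0).
move=> h; exists (phi h); case: pselect => [ex|]; last by case; exists h.
by apply: phi_inj; case: (cid ex).
Qed.

Theorem theorem5p7 (H : Type) (mul : H -> H -> H) (one : H) (inv : H -> H) :
  is_group mul one inv ->
  analytic (E_set mul) /\ (meager (E_set mul) \/ comeager (E_set mul)).
Proof.
move=> _.
have [[G EG]|noE] := pselect (E_set mul !=set0).
  have [e e_surj] := enumeration_of_embeddable one EG.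
  split; first exact: analytic_E_set e_surj.
  by case: (E_set_dichotomy mul e_surj) => h; [left | right]; apply: cyl_meager_meager.
have -> : E_set mul = set0 by apply/seteqP; split => // G EG; apply: noE; exists G.
split; last by left; apply: cyl_meager_meager cyl_meager0.
exists Baire, set0, decode; split => //.
- exact: Baire_polish.
- exact: sigma_algebra0.
- by apply: decode_continuous.
- exact: image_set0.
Qed.
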